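(* Let $c,d>0$, $l\in\mathbb{Z}_+$ and $m\in\{0,\dots,l\}$. Then $$\lim_{q\uparrow1}R_{l-m}\big(q^{-l}-\tfrac dc q^{-l};\tfrac cd,2l;q\big)=\frac{(m+1)_{l-m}}{(l+m+1)_{l-m}}\Big(1+\frac dc\Big)^{l-m}R^{(m,m)}_{l-m}\Big(\frac{c-d}{c+d}\Big).$$
   Context: $(a)_n=a(a+1)\cdots(a+n-1)$. $R^{(\alpha,\beta)}_n$ is the Jacobi polynomial of degree $n$ normalized by $R^{(\alpha,\beta)}_n(1)=1$. Dual $q$-Krawtchouk value: $R_j(q^{-l}-\tfrac dc q^{-l};\tfrac cd,2l;q)=\sum_{k=0}^{j}\frac{(q^{-j};q)_k(q^{-l};q)_k(-\frac dc q^{-l};q)_k}{(q^{-2l};q)_k(q;q)_k}q^k$ with $(a;q)_k=\prod_{i=0}^{k-1}(1-aq^i)$. *)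

From HB Require Import structures.
From mathcomp Require Import all_boot all_order all_algebra.
From mathcomp Require Import all_classical all_reals all_analysis.
Set Implicit Arguments. Unset Strict Implicit. Unset Printing Implicit Defensive.
Import Order.TTheory GRing.Theory Num.Theory.
Local Open Scope ring_scope.

Definition poch {R : realType} (a : R) (n : nat) : R :=
  \prod_(i < n) (a + i%:R).

Definition qpoch {R : realType} (a q : R) (k : nat) : R :=
  \prod_(i < k) (1 - a * q ^+ i).

(* Normalized Jacobi polynomial R_n^{(al,be)}(x) = P_n^{(al,be)}(x) / P_n^{(al,be)}(1),
   via the standard hypergeometric definition
   P_n^{(al,be)}(x) = (al+1)_n/n! * 2F1(-n, n+al+be+1; al+1; (1-x)/2),
   so R_n^{(al,be)}(x) = 2F1(-n, n+al+be+1; al+1; (1-x)/2). *)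
Definition jacobiR {R : realType} (n : nat) (al be x : R) : R :=
  \sum_(k < n.+1)
    (poch (- n%:R) k * poch (n%:R + al + be + 1) k
       / (poch (al + 1) k * (k`!)%:R)) * ((1 - x) / 2) ^+ k.

(* The dual q-Krawtchouk value R_j(q^{-l} - (d/c) q^{-l}; c/d, 2l; q), as given:
   sum_{k=0}^j (q^{-j};q)_k (q^{-l};q)_k (-(d/c) q^{-l};q)_k / ((q^{-2l};q)_k (q;q)_k) q^k. *)
Definition dualqK {R : realType} (j l : nat) (c d q : R) : R :=
  \sum_(k < j.+1)
    (qpoch (q ^- j) q k * qpoch (q ^- l) q k * qpoch (- (d / c) * q ^- l) q k
       / (qpoch (q ^- (2 * l)) q k * qpoch q q k)) * q ^+ k.

From HB Require Import structures.
From mathcomp Require Import all_boot all_order all_algebra.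
From mathcomp Require Import all_classical all_reals all_analysis.
From mathcomp Require Import ring zify.
Import Order.TTheory GRing.Theory Num.Theory numFieldNormedType.Exports.
Local Open Scope ring_scope.
Local Open Scope classical_set_scope.

(* Each of (q^-n;q)_k and (q;q)_k is (1-q)^k times a product of q-numbers
   (1 - q^e)/(1 - q), which tend to e as q tends to 1.  Dividing the numerator
   and the denominator of every term of R_j by (1-q)^(2k) therefore lets the
   limit be taken termwise: R_j tends to 2F1(-j,-l;-2l;1+d/c).  With z = d/c,
   this 2F1 and the Jacobi side are both (l!)^2/(2l)! times a coefficient of
   (1+x)^(l+m) (x-z)^(l-m), read once from the polynomial and once from its
   reciprocal, hence they agree. *)

Section BinomialSums.
Context {R : comPzRingType} (v : R).

Lemma sum_binS j (F : nat -> R) :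
  \sum_(k < j.+2) 'C(j.+1, k)%:R * F k =
  \sum_(k < j.+1) 'C(j, k)%:R * F k + \sum_(k < j.+1) 'C(j, k)%:R * F k.+1.
Proof.
rewrite big_ord_recl /=.
under eq_bigr => k _ do rewrite binS natrD mulrDl.
rewrite big_split /= addrA; congr (_ + _).
rewrite bin0 -(bin0 j) -[LHS](big_ord_recl j.+1 (fun k => 'C(j, k)%:R * F k)).
by rewrite big_ord_recr /= bin_small // mul0r addr0.
Qed.

(* [jacobi_binsum j n L] and [krawt_binsum j n l] are the coefficients of x^L
   in (1+x)^n (1+vx)^j and of x^l in its reciprocal (1+x)^n (x+v)^j. *)
Definition jacobi_binsum j n L :=
  \sum_(k < j.+1) 'C(j, k)%:R * ('C(n + k, L)%:R * v ^+ k * (1 - v) ^+ (j - k)).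

Definition krawt_binsum j n l :=
  \sum_(k < j.+1) 'C(j, k)%:R * ('C(n + j - k, l)%:R * (v - 1) ^+ k).

Lemma jacobi_binsumS j n L :
  jacobi_binsum j.+1 n L = (1 - v) * jacobi_binsum j n L + v * jacobi_binsum j n.+1 L.
Proof.
rewrite /jacobi_binsum.
rewrite (sum_binS j (fun k => 'C(n + k, L)%:R * v ^+ k * (1 - v) ^+ (j.+1 - k))).
rewrite !big_distrr /=.
congr (_ + _); apply: eq_bigr => k _.
  by rewrite subSn ?exprS; [ring | rewrite -ltnS].
by rewrite subSS addnS addSn exprS; ring.
Qed.

Lemma krawt_binsumS j n l :
  krawt_binsum j.+1 n l = krawt_binsum j n.+1 l + (v - 1) * krawt_binsum j n l.
Proof.
rewrite /krawt_binsum.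
rewrite (sum_binS j (fun k => 'C(n + j.+1 - k, l)%:R * (v - 1) ^+ k)) !big_distrr /=.
congr (_ + _); apply: eq_bigr => k _; first by rewrite addnS addSn.
by rewrite addnS subSS exprS; ring.
Qed.

Lemma jacobi_binsum_binS j n L :
  jacobi_binsum j n.+1 L.+1 = jacobi_binsum j n L.+1 + jacobi_binsum j n L.
Proof.
rewrite /jacobi_binsum -big_split /=; apply: eq_bigr => k _.
by rewrite addSn binS natrD; ring.
Qed.

Lemma jacobi_binsum_bin0 j n : jacobi_binsum j n.+1 0 = jacobi_binsum j n 0.
Proof. by apply: eq_bigr => k _; rewrite !bin0. Qed.

Lemma krawt_binsum_small j n l : (n + j < l)%N -> krawt_binsum j n l = 0.
Proof.
by move=> lt_nj_l; apply: big1 => k _; rewrite (@bin_small (n + j - k)) ?mul0r ?mulr0 //; lia.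
Qed.

Lemma krawt_jacobi_binsum j n l L :
  (l + L = n + j)%N -> krawt_binsum j n l = jacobi_binsum j n L.
Proof.
elim: j n l L => [|j IHj] n l L.
  rewrite addn0 /jacobi_binsum /krawt_binsum !big_ord1 !addn0 !subn0 => e.
  have -> : L = (n - l)%N by rewrite -e addKn.
  by rewrite bin_sub ?expr0 ?mulr1 // -e leq_addr.
move=> e; rewrite krawt_binsumS (IHj n.+1 l L); last by rewrite e addnS.
case: L e => [|L] e.
  rewrite krawt_binsum_small ?mulr0 ?addr0; last by lia.
  by rewrite jacobi_binsumS jacobi_binsum_bin0; ring.
rewrite (IHj n l L); last by lia.
by rewrite jacobi_binsumS !jacobi_binsum_binS; ring.
Qed.

End BinomialSums.

Section Pochhammer.
Context {R : realType}.

Lemma natr_fact_neq0 n : (n`!%:R : R) != 0.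
Proof. by rewrite pnatr_eq0 -lt0n fact_gt0. Qed.

Lemma natr_bin_fact n k : (k <= n)%N ->
  ('C(n, k)%:R : R) = n`!%:R / (k`!%:R * (n - k)`!%:R).
Proof.
by move=> le_kn; rewrite -(bin_fact le_kn) !natrM mulfK // mulf_neq0 ?natr_fact_neq0.
Qed.

Lemma natr_ffact n k : (k <= n)%N -> ((n ^_ k)%:R : R) = n`!%:R / (n - k)`!%:R.
Proof. by move=> le_kn; rewrite -(ffact_fact le_kn) natrM mulfK ?natr_fact_neq0. Qed.

Lemma poch_natS a k : poch (a.+1%:R : R) k = (a + k)`!%:R / a`!%:R.
Proof.
elim: k => [|k IHk]; first by rewrite /poch big_ord0 addn0 divff ?natr_fact_neq0.
rewrite /poch big_ord_recr /= -/(poch _ k) IHk addnS factS natrM -natrD addSn.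
by rewrite mulrAC [_.+1%:R * _]mulrC.
Qed.

Lemma poch_opp_nat n k : (k <= n)%N -> poch (- n%:R : R) k = (-1) ^+ k * (n ^_ k)%:R.
Proof.
move=> le_kn; rewrite /poch ffact_prod natr_prod -[k in (-1) ^+ k]card_ord -prodrN.
apply: eq_bigr => i _; rewrite natrB ?opprB 1?addrC //.
exact: leq_trans (ltnW (ltn_ord i)) le_kn.
Qed.

Definition hyp2F1 (n : nat) (a b c x : R) :=
  \sum_(k < n.+1) poch a k * poch b k / (poch c k * k`!%:R) * x ^+ k.

Lemma hyp2F1_krawt_binsum (z : R) j l n : (j <= l)%N -> (n + j = 2 * l)%N ->
  hyp2F1 j (- j%:R) (- l%:R) (- (2 * l)%:R) (1 + z) =
  l`!%:R ^+ 2 / (2 * l)`!%:R * krawt_binsum (- z) j n l.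
Proof.
move=> le_jl e; rewrite /hyp2F1 /krawt_binsum big_distrr.
apply: eq_bigr => -[k /= lt_kj] _; have le_kj : (k <= j)%N by [].
rewrite e !poch_opp_nat ?natr_ffact ?(natr_bin_fact le_kj) ?natr_bin_fact; try lia.
have -> : (2 * l - k - l = l - k)%N by lia.
rewrite -opprD addrC (exprNn (z + 1)).
by field; rewrite !natr_fact_neq0 signr_eq0.
Qed.

Lemma jacobiR_jacobi_binsum (z : R) l m : 1 + z != 0 -> (m <= l)%N ->
  poch m.+1%:R (l - m) / poch (l + m).+1%:R (l - m) * (1 + z) ^+ (l - m)
    * jacobiR (l - m) m%:R m%:R ((1 - z) / (1 + z)) =
  l`!%:R ^+ 2 / (2 * l)`!%:R * jacobi_binsum (- z) (l - m) (l + m) l.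
Proof.
move=> z1_neq0 le_ml; rewrite /jacobiR.
have -> : (1 - (1 - z) / (1 + z)) / 2 = z / (1 + z) by field.
have -> : (l - m)%:R + m%:R + m%:R + 1 = (l + m).+1%:R :> R.
  by rewrite -!natrD natr1 subnK.
rewrite natr1 !poch_natS /jacobi_binsum !big_distrr.
apply: eq_bigr => -[k /= lt_kj] _; set j := (l - m)%N.
have le_kj : (k <= j)%N by [].
rewrite !poch_natS poch_opp_nat ?natr_ffact ?(natr_bin_fact le_kj) ?natr_bin_fact //; try lia.
have -> : (m + j = l)%N by rewrite subnKC.
have -> : (l + m + j = 2 * l)%N by lia.
have -> : (l + m + k - l = m + k)%N by lia.
rewrite opprK (exprNn z) expr_div_n -(subnK le_kj) exprD addnK.
by field; rewrite !natr_fact_neq0 expf_neq0.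
Qed.

End Pochhammer.

Lemma mulf_div_rescale {F : fieldType} (x a b u v e : F) : x != 0 ->
  a * b * e / (u * v) = a / x * (b / x) / (u / x * (v / x)) * e.
Proof.
move=> x_neq0; rewrite !invfM !invrK.
by move: u^-1 v^-1 => u' v'; field.
Qed.

Section QLimits.
Context {R : realType}.
Implicit Types q : R.

Lemma eq_cvg_left1 (f g : R -> R) (a : R) :
  (forall q, 0 < q < 1 -> f q = g q) -> g @ 1^'- --> a -> f @ 1^'- --> a.
Proof.
move=> eq_fg g_cvg; apply: cvg_trans g_cvg; apply: near_eq_cvg; near=> q.
apply/esym/eq_fg; apply/andP; split; near: q; [exact: nbhs_left_gt ltr01 | exact: nbhs_left_lt].
Unshelve. all: by end_near.
Qed.

Lemma exprn_cvg_left1 n : (fun q => q ^+ n) @ 1^'- --> (1 : R).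
Proof. by rewrite -[X in _ --> X](expr1n R n); apply: cvg_at_left_filter; exact: exprn_continuous. Qed.

Lemma qnat_cvg1 n : (fun q => (1 - q ^+ n) / (1 - q)) @ 1^'- --> (n%:R : R).
Proof.
apply: (@eq_cvg_left1 _ (fun q => \sum_(i < n) q ^+ i)).
  move=> q /andP[_ q_lt1].
  by rewrite -opprB subrX1 -mulNr opprB mulrAC divff ?mul1r // subr_eq0 eq_sym lt_eqF.
rewrite -[n in n%:R]card_ord -sumr_const.
by apply: cvg_big => [|i _]; [exact: add_continuous | exact: exprn_cvg_left1].
Qed.

Lemma qint_cvg1 (e : int) : (fun q => (1 - q ^ e) / (1 - q)) @ 1^'- --> (e%:~R : R).
Proof.
case: e => n; first exact: qnat_cvg1.
apply: (@eq_cvg_left1 _ (fun q => - ((1 - q ^+ n.+1) / (1 - q)) / q ^+ n.+1)).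
  move=> q /andP[q_gt0 q_lt1]; have -> : q ^ Negz n = (q ^+ n.+1)^-1 by [].
  have q_neq0 : q != 0 by rewrite gt_eqF.
  have q1_neq0 : 1 - q != 0 by rewrite subr_eq0 eq_sym lt_eqF.
  by field; rewrite q1_neq0 expf_neq0.
rewrite NegzE intrN -[X in _ --> X]divr1.
apply: cvgM; first by apply: cvgN; exact: qnat_cvg1.
by apply: cvgV; [exact: oner_neq0 | exact: exprn_cvg_left1].
Qed.

Lemma qpoch_cvg1 (a : int) k :
  (fun q => qpoch (q ^ a) q k / (1 - q) ^+ k) @ 1^'- --> poch (a%:~R : R) k.
Proof.
apply: (@eq_cvg_left1 _ (fun q => \prod_(i < k) ((1 - q ^ (a + i%:Z)) / (1 - q)))).
  move=> q /andP[q_gt0 _]; rewrite prodf_div prodr_const card_ord.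
  by congr (_ / _); apply: eq_bigr => i _; rewrite expfzDr ?gt_eqF.
apply: cvg_big => [|i _]; first exact: mul_continuous.
by have := qint_cvg1 (a + i%:Z); rewrite intrD.
Qed.

Lemma qpoch_scaled_cvg1 (x : R) n k :
  (fun q => qpoch (- x * q ^- n) q k) @ 1^'- --> (1 + x) ^+ k.
Proof.
have factor_cvg i : (fun q => 1 - - x * q ^- n * q ^+ i) @ 1^'- --> 1 - - x * 1^-1 * 1.
  apply: cvgB; first exact: cvg_cst.
  apply: cvgM; last exact: exprn_cvg_left1.
  by apply: cvgM; [exact: cvg_cst | apply: cvgV; [exact: oner_neq0 | exact: exprn_cvg_left1]].
rewrite invr1 !mulr1 opprK in factor_cvg.
rewrite -[k in _ ^+ k]card_ord -prodr_const.
by apply: cvg_big => [|i _]; [exact: mul_continuous | exact: factor_cvg].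
Qed.

Lemma qpoch_opp_cvg1 n k :
  (fun q => qpoch (q ^- n) q k / (1 - q) ^+ k) @ 1^'- --> poch (- n%:R : R) k.
Proof.
have <- : (- n%:Z)%:~R = - n%:R :> R by rewrite intrN.
under eq_cvg do rewrite (invr_expz _ n).
exact: qpoch_cvg1.
Qed.

Lemma qpoch_q_cvg1 k : (fun q => qpoch q q k / (1 - q) ^+ k) @ 1^'- --> (k`!%:R : R).
Proof. by have := qpoch_cvg1 1 k; rewrite (poch_natS 0) add0n fact0 divr1. Qed.

Lemma dualqK_cvg1 (c d : R) j l : (j <= 2 * l)%N ->
  (fun q => dualqK j l c d q) @ 1^'- -->
    hyp2F1 j (- j%:R) (- l%:R) (- (2 * l)%:R) (1 + d / c).
Proof.
move=> le_j2l; pose Q n k q := qpoch (q ^- n) q k / (1 - q) ^+ k.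
pose Qq k q := qpoch q q k / (1 - q) ^+ k.
apply: (@eq_cvg_left1 _ (fun q => \sum_(k < j.+1) Q j k q * Q l k q
  / (Q (2 * l)%N k q * Qq k q) * qpoch (- (d / c) * q ^- l) q k * q ^+ k)).
  move=> q /andP[_ q_lt1]; apply: eq_bigr => k _.
  have X_neq0 : (1 - q) ^+ k != 0 by rewrite expf_neq0 // subr_eq0 eq_sym lt_eqF.
  by rewrite (mulf_div_rescale _ _ _ _ _ _ X_neq0).
apply: cvg_big => [|k _]; first exact: add_continuous.
have le_k2l : (k <= 2 * l)%N by have := ltn_ord k; lia.
have denom_neq0 : poch (- (2 * l)%:R) k * k`!%:R != 0 :> R.
  by rewrite poch_opp_nat // !mulf_neq0 ?signr_eq0 ?natr_fact_neq0 // pnatr_eq0 -lt0n ffact_gt0.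
rewrite -[X in _ --> X]mulr1; apply: cvgM; last exact: exprn_cvg_left1.
apply: cvgM; last exact: qpoch_scaled_cvg1.
apply: cvgM; first by apply: cvgM; exact: qpoch_opp_cvg1.
apply: cvgV => //; apply: cvgM; [exact: qpoch_opp_cvg1 | exact: qpoch_q_cvg1].
Qed.

End QLimits.

Theorem mainTheorem7 (R : realType) (c d : R) (l m : nat)
  (hc : 0 < c) (hd : 0 < d) (hl : (0 < l)%N) (hm : (m <= l)%N) :
  (fun q : R => dualqK (l - m) l c d q) @ (1 : R)^'- -->
    (poch (m.+1%:R) (l - m) / poch ((l + m).+1%:R) (l - m)
      * (1 + d / c) ^+ (l - m)
      * jacobiR (l - m) m%:R m%:R ((c - d) / (c + d)) : R).
Proof.
have -> : (c - d) / (c + d) = (1 - d / c) / (1 + d / c).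
  by field; rewrite !gt_eqF ?addr_gt0.
rewrite jacobiR_jacobi_binsum //; last by rewrite gt_eqF // addr_gt0 ?divr_gt0.
rewrite -(krawt_jacobi_binsum _ _ _ l l); last by lia.
rewrite -hyp2F1_krawt_binsum ?leq_subr //; last by lia.
by apply: dualqK_cvg1; lia.
Qed.
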